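(* Let $(A,B,C,D)$ be reduced words in $a^{\pm1},b^{\pm1}$ defining a local $\mathrm{Aut}(F_3)$ braid representation. Let $x,\mathbf{C},\mathbf{D}$ be formal letters and write the word $C(B(x,\mathbf{C}),\mathbf{D})$, reduced over the alphabet $\{x^{\pm1},\mathbf{C}^{\pm1},\mathbf{D}^{\pm1}\}$, in the form $$W_0(\mathbf{C},\mathbf{D})\,x^{n_1}\,W_1(\mathbf{C},\mathbf{D})\,x^{n_2}\cdots x^{n_k}\,W_k(\mathbf{C},\mathbf{D}),$$ where $W_0,W_k$ are reduced (possibly empty) words in $\mathbf{C}^{\pm1},\mathbf{D}^{\pm1}$, $W_1,\dots,W_{k-1}$ are nonempty reduced words in $\mathbf{C}^{\pm1},\mathbf{D}^{\pm1}$, and $n_1,\dots,n_k$ are nonzero integers. Let $W_i$ also denote the word $W_i(C(y,z),D(y,z))$ in $y^{\pm1},z^{\pm1}$. Then, as words, $$\mathrm{red}\big(C(B(x,C(y,z)),D(y,z))\big)\equiv \mathrm{red}(W_0)\,x^{n_1}\,\mathrm{red}(W_1)\,x^{n_2}\cdots x^{n_k}\,\mathrm{red}(W_k).$$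
   Context: $F_2$ is free on $a,b$; $F_3$ is free on $x_1,x_2,x_3$ (here also written $x,y,z$). For a word $W$ in $a^{\pm1},b^{\pm1}$, $W(U,V)$ denotes the word obtained by substituting the word $U$ for $a$ and $V$ for $b$ (and $U^{-1},V^{-1}$ for $a^{-1},b^{-1}$). $\mathrm{red}(W)$ is the unique reduced word obtained from $W$ by cancelling subwords $ss^{-1}$, $s^{-1}s$; $\equiv$ denotes equality as words. A quadruple $(A,B,C,D)$ of reduced words defines a local $\mathrm{Aut}(F_3)$ braid representation if $\tau:a\mapsto A,b\mapsto B$ and $\kappa:a\mapsto C,b\mapsto D$ are automorphisms of $F_2$ and the automorphisms $s_1: x_1\mapsto A(x_1,x_2),\ x_2\mapsto B(x_1,x_2),\ x_3\mapsto x_3$ and $s_2: x_1\mapsto x_1,\ x_2\mapsto C(x_2,x_3),\ x_3\mapsto D(x_2,x_3)$ of $F_3$ satisfy $s_1s_2s_1=s_2s_1s_2$. *)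

From mathcomp Require Import ssreflect ssrfun ssrbool eqtype ssrnat seq.
From mathcomp Require Import ssralg ssrint.
Set Implicit Arguments. Unset Strict Implicit. Unset Printing Implicit Defensive.

(* A letter (i, true) is the generator number i, (i, false) its inverse. *)
Definition letter := (nat * bool)%type.
Definition word := seq letter.

Definition inv_letter (l : letter) : letter := (l.1, ~~ l.2).
Definition winv (w : word) : word := rev (map inv_letter w).
Definition gen (i : nat) : word := [:: (i, true)].

Definition valid (n : nat) (w : word) : bool := all (fun l => l.1 < n) w.

Fixpoint reduced (w : word) : bool :=
  match w with
  | l :: ((l' :: _) as t) => (l' != inv_letter l) && reduced t
  | _ => true
  end.

Fixpoint red (w : word) : word :=
  match w with
  | [::] => [::]
  | l :: t =>
      match red t with
      | l' :: r' => if l' == inv_letter l then r' else l :: l' :: r'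
      | [::] => [:: l]
      end
  end.

Definition subst (f : nat -> word) (w : word) : word :=
  flatten (map (fun l => if l.2 then f l.1 else winv (f l.1)) w).

(* W(U, V): substitute U for a (= generator 0) and V for b (= generator 1) *)
Definition app2 (W U V : word) : word :=
  subst (fun i => if i == 0 then U else if i == 1 then V else gen i) W.

(* The substitution sigma (generator i |-> sigma i) induces an automorphism of
   the free group F_n on generators 0..n-1 (elements = reduced words):
   it is well defined, injective and surjective. *)
Definition is_aut (n : nat) (sigma : nat -> word) : Prop :=
  [/\ (forall i, i < n -> valid n (sigma i)),
      (forall u v, valid n u -> valid n v ->
         red (subst sigma u) = red (subst sigma v) -> red u = red v) &
      (forall w, valid n w -> exists2 u, valid n u & red (subst sigma u) = red w)].

Definition pair_map (U V : word) : nat -> word :=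
  fun i => if i == 0 then U else if i == 1 then V else gen i.

(* s1 : x1 |-> A(x1,x2), x2 |-> B(x1,x2), x3 |-> x3 ; x_j = generator j-1 *)
Definition s1 (A B : word) : nat -> word :=
  fun i => if i == 0 then app2 A (gen 0) (gen 1)
           else if i == 1 then app2 B (gen 0) (gen 1) else gen i.
Definition s2 (C D : word) : nat -> word :=
  fun i => if i == 1 then app2 C (gen 1) (gen 2)
           else if i == 2 then app2 D (gen 1) (gen 2) else gen i.

(* The braid relation
   s1 s2 s1 = s2 s1 s2 is checked on the generators x1,x2,x3 (it is palindromic,
   so independent of the composition convention). *)
Definition local_braid_rep (A B C D : word) : Prop :=
  [&& valid 2 A && reduced A, valid 2 B && reduced B,
      valid 2 C && reduced C & valid 2 D && reduced D] /\
  is_aut 2 (pair_map A B) /\ is_aut 2 (pair_map C D) /\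
      (forall i, i < 3 ->
        red (subst (s1 A B) (subst (s2 C D) (s1 A B i)))
        = red (subst (s2 C D) (subst (s1 A B) (s2 C D i)))).

(* x^n for the letter x = generator 0 *)
Definition xpow (n : int) : word :=
  match n with
  | Posz m => nseq m (0, true)
  | Negz m => nseq m.+1 (0, false)
  end.

(* W0 x^{n1} W1 x^{n2} ... x^{nk} Wk, with blocks = [(n1,W1); ...; (nk,Wk)] *)
Definition xform (W0 : word) (blocks : seq (int * word)) : word :=
  W0 ++ flatten (map (fun p => xpow p.1 ++ p.2) blocks).

(* a reduced word in the letters C = generator 1 and D = generator 2 *)
Definition CDword (w : word) : bool :=
  all (fun l => (l.1 == 1) || (l.1 == 2)) w && reduced w.

From mathcomp Require Import ssreflect ssrfun ssrbool eqtype ssrnat seq.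
From mathcomp Require Import ssralg ssrnum ssrint.

Set Implicit Arguments.
Unset Strict Implicit.
Unset Printing Implicit Defensive.

(* The word C(B(x,C(y,z)),D(y,z)) is the image of C(B(x,C),D) under the
   substitution s2 = (x, C, D |-> x, C(y,z), D(y,z)), and free reduction
   commutes with substitution, so it reduces like the image of
   W0 x^n1 W1 ... x^nk Wk.  Since s2 fixes x and sends the blocks W_i to
   x-free words, the word red(W0) x^n1 red(W1) ... red(Wk) is already reduced
   as soon as no x-powers meet, i.e. as soon as red(W_i) is nonempty for
   0 < i < k; this holds because kappa is injective. *)

Definition push (l : letter) (r : word) : word :=
  if r is l' :: r' then if l' == inv_letter l then r' else l :: r else [:: l].

Lemma redE l w : red (l :: w) = push l (red w).
Proof. by rewrite /=; case: (red w). Qed.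

Lemma inv_letterK : involutive inv_letter.
Proof. by case=> i b; rewrite /inv_letter /= negbK. Qed.

Lemma reduced_behead l w : reduced (l :: w) -> reduced w.
Proof. by case: w => // ? ? /andP[]. Qed.

Lemma reduced_push l r : reduced r -> reduced (push l r).
Proof.
case: r => [|l' r] //= Hr; case: ifP => [_|E]; first exact: reduced_behead Hr.
by rewrite /= E Hr.
Qed.

Lemma reduced_red w : reduced (red w).
Proof. by elim: w => // l w IH; rewrite redE reduced_push. Qed.

Lemma red_reduced w : reduced w -> red w = w.
Proof.
elim: w => // l w IH Hw; rewrite redE IH; last exact: reduced_behead Hw.
by case: w Hw {IH} => //= l' w /andP[/negbTE->].
Qed.

Lemma redK w : red (red w) = red w.
Proof. exact/red_reduced/reduced_red. Qed.

Lemma pushK l r : reduced r -> push l (push (inv_letter l) r) = r.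
Proof.
case: r => [|l' r] /=; first by rewrite eqxx.
case: ifP => [/eqP->|_] Hr /=; last by rewrite eqxx.
rewrite !inv_letterK in Hr *.
by case: r Hr => //= l'' r /andP[/negbTE->].
Qed.

Lemma red_push_cat l r v : red (push l r ++ v) = push l (red (r ++ v)).
Proof.
case: r => [|l' r]; first exact: redE.
rewrite {1}/push; case: ifP => [/eqP->|_]; last exact: redE.
by rewrite cat_cons redE pushK ?reduced_red.
Qed.

Lemma red_catl u v : red (u ++ v) = red (red u ++ v).
Proof. by elim: u => // l u IH; rewrite cat_cons !redE IH -red_push_cat. Qed.

Lemma red_catr u v : red (u ++ v) = red (u ++ red v).
Proof. by elim: u => [|l u IH]; rewrite ?redK // !cat_cons !redE IH. Qed.

Lemma red_cat_congr u u' v v' :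
  red u = red u' -> red v = red v' -> red (u ++ v) = red (u' ++ v').
Proof. by move=> Eu Ev; rewrite red_catl Eu -red_catl red_catr Ev -red_catr. Qed.

Lemma red_subset w : {subset red w <= w}.
Proof.
elim: w => // l w IH x; rewrite redE in_cons.
case E: (red w) => [|l' r] /=; first by rewrite mem_seq1 => ->.
case: ifP => _ Hx.
  by rewrite IH ?orbT // E in_cons Hx orbT.
by move: Hx; rewrite in_cons -E => /orP[->|/IH->]; rewrite ?orbT.
Qed.

Lemma all_red (P : pred letter) w : all P w -> all P (red w).
Proof. by move=> /allP Hw; apply/allP => x /red_subset /Hw. Qed.

Lemma winv_cat u v : winv (u ++ v) = winv v ++ winv u.
Proof. by rewrite /winv map_cat rev_cat. Qed.

Lemma winv_cons l w : winv (l :: w) = winv w ++ [:: inv_letter l].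
Proof. by rewrite -cat1s winv_cat. Qed.

Lemma winvK : involutive winv.
Proof.
move=> w; rewrite /winv map_rev revK -map_comp map_id_in // => l _ /=.
exact: inv_letterK.
Qed.

Lemma red_cancel u : red (u ++ winv u) = [::].
Proof.
elim: u => // l u IH.
by rewrite winv_cons catA cat_cons redE red_catl IH /= eqxx.
Qed.

Lemma red_cat_cancel u v : red (u ++ winv u ++ v) = red v.
Proof. by rewrite catA red_catl red_cancel. Qed.

Definition subst_letter (f : nat -> word) (l : letter) : word :=
  if l.2 then f l.1 else winv (f l.1).

Lemma subst_cons f l w : subst f (l :: w) = subst_letter f l ++ subst f w.
Proof. by []. Qed.

Lemma subst_cat f u v : subst f (u ++ v) = subst f u ++ subst f v.
Proof. by rewrite /subst map_cat flatten_cat. Qed.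

Lemma subst_gen f i : subst f (gen i) = f i.
Proof. exact: cats0. Qed.

Lemma subst_letter_inv f l :
  subst_letter f (inv_letter l) = winv (subst_letter f l).
Proof. by case: l => i [] //=; rewrite /subst_letter /= winvK. Qed.

Lemma subst_winv f w : subst f (winv w) = winv (subst f w).
Proof.
elim: w => // l w IH.
by rewrite winv_cons subst_cat IH subst_cons winv_cat /subst /= cats0 subst_letter_inv.
Qed.

Lemma subst_comp f g w : subst f (subst g w) = subst (subst f \o g) w.
Proof.
elim: w => // l w IH; rewrite !subst_cons subst_cat IH /subst_letter.
by case: l.2; rewrite ?subst_winv.
Qed.

Lemma eq_subst n f g w : valid n w -> (forall i, i < n -> f i = g i) ->
  subst f w = subst g w.
Proof.
move=> + Efg; elim: w => // l w IH /= /andP[Hl Hw].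
by rewrite !subst_cons IH // /subst_letter Efg.
Qed.

Lemma subst_app2 f W U V : valid 2 W ->
  subst f (app2 W U V) = app2 W (subst f U) (subst f V).
Proof.
by move=> vW; rewrite /app2 subst_comp; apply: (eq_subst vW); case=> [|[|]].
Qed.

Lemma red_subst f w : red (subst f w) = red (subst f (red w)).
Proof.
elim: w => // l w IH.
rewrite subst_cons red_catr IH -red_catr redE.
case: (red w) => [|l' r] //=; case: ifP => // /eqP->.
by rewrite subst_cons subst_letter_inv red_cat_cancel.
Qed.

Lemma all_winv (p : pred nat) w :
  all (fun l => p l.1) (winv w) = all (fun l => p l.1) w.
Proof. by rewrite /winv all_rev all_map. Qed.

Lemma all_subst (p : pred nat) f w :
  all (fun l => all (fun l' => p l'.1) (f l.1)) w ->
  all (fun l => p l.1) (subst f w).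
Proof.
elim: w => // l w IH /= /andP[Hl Hw].
by rewrite subst_cons all_cat IH // andbT /subst_letter; case: l.2; rewrite ?all_winv.
Qed.

(* Renaming generator i to i+1 turns words in a, b into the same words in the
   generators 1, 2, i.e. in y, z (or in the formal letters C, D). *)
Definition shift (l : letter) : letter := (l.1.+1, l.2).

Lemma shift_inj : injective shift.
Proof. by case=> i b [j c] [-> ->]. Qed.

Lemma red_map_shift w : red (map shift w) = map shift (red w).
Proof.
elim: w => // l w IH; rewrite map_cons !redE IH.
case: (red w) => [|l' r] //=.
by rewrite -[inv_letter _]/(shift (inv_letter l)) (inj_eq shift_inj); case: ifP.
Qed.

Lemma subst_map_shift f w : subst f (map shift w) = subst (f \o succn) w.
Proof. by elim: w => // l w IH; rewrite map_cons !subst_cons IH. Qed.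

Lemma map_shift_subst g w :
  map shift (subst g w) = subst (map shift \o g) w.
Proof.
elim: w => // l w IH; rewrite !subst_cons map_cat IH /subst_letter /=.
by case: l.2; rewrite // /winv map_rev -!map_comp.
Qed.

Lemma app2_gen12 W : valid 2 W -> app2 W (gen 1) (gen 2) = map shift W.
Proof.
elim: W => // [[i b]] W IH /andP[Hi HW].
by rewrite /app2 subst_cons -/(app2 W _ _) IH //; case: i Hi => [|[|]] //; case: b.
Qed.

Lemma subst_s2_shift C D W : valid 2 C -> valid 2 D -> valid 2 W ->
  subst (s2 C D) (map shift W) = map shift (subst (pair_map C D) W).
Proof.
move=> vC vD vW; rewrite subst_map_shift map_shift_subst.
by apply: (eq_subst vW); case=> [|[|]] // _; rewrite /s2 /= app2_gen12.
Qed.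

Lemma aut_red_eq0 n f w :
  is_aut n f -> valid n w -> red (subst f w) = [::] -> red w = [::].
Proof. by case=> _ f_inj _ vw Hw; apply: (f_inj w [::] vw isT); rewrite Hw. Qed.

Lemma map_shift_valid2 (W : word) : all (fun l => (l.1 == 1) || (l.1 == 2)) W ->
  exists2 W', valid 2 W' & W = map shift W'.
Proof.
move=> HW; exists (map (fun l => (l.1.-1, l.2)) W).
  by rewrite /valid all_map; apply/allP => -[[|[|[|i]]] b] /(allP HW).
by elim: W HW => //= -[[|i] b] W IH /andP[// _ /IH <-].
Qed.

Lemma red_subst_s2_neq0 C D W : valid 2 C -> valid 2 D ->
  is_aut 2 (pair_map C D) -> CDword W -> W != [::] ->
  red (subst (s2 C D) W) != [::].
Proof.
move=> vC vD aut /andP[/map_shift_valid2[W' vW' ->] rW].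
rewrite subst_s2_shift // red_map_shift; apply: contra_neq.
move=> /(congr1 size); rewrite size_map => /size0nil /(aut_red_eq0 aut vW') W'0.
by rewrite -(red_reduced rW) red_map_shift W'0.
Qed.

Definition xfree (w : word) : bool := all (fun l : letter => l.1 != 0) w.

Lemma xfree_subst_s2 C D W :
  valid 2 C -> valid 2 D -> CDword W -> xfree (subst (s2 C D) W).
Proof.
move=> vC vD /andP[HW _]; apply: (all_subst (p := predC1 0)); apply/allP => l /(allP HW).
by case/orP=> /eqP->; rewrite /s2 /= app2_gen12 // all_map; apply/allP.
Qed.

Lemma inv_letter_neq l : l != inv_letter l.
Proof. by case: l => i b; rewrite /inv_letter /= xpair_eqE eqxx; case: b. Qed.

Lemma reduced_nseq m l : reduced (nseq m l).
Proof. by elim: m => [|[|m] IH] //=; rewrite inv_letter_neq. Qed.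

Lemma xpowE n : xpow n = nseq (absz n) (0, (0 <= n)%R).
Proof. by case: n. Qed.

Lemma reduced_xpow n : reduced (xpow n).
Proof. by rewrite xpowE reduced_nseq. Qed.

Lemma subst_xpow f n : f 0 = gen 0 -> subst f (xpow n) = xpow n.
Proof.
move=> f0; rewrite xpowE; elim: (absz n) => // m IH.
by rewrite subst_cons IH /subst_letter /= f0; case: (0 <= n)%R.
Qed.

Lemma xform_cons W0 p bs : xform W0 (p :: bs) = W0 ++ xpow p.1 ++ xform p.2 bs.
Proof. by rewrite /xform /= -catA. Qed.

Lemma subst_xform f W0 bs : f 0 = gen 0 ->
  subst f (xform W0 bs)
  = xform (subst f W0) (map (fun p => (p.1, subst f p.2)) bs).
Proof.
move=> f0; elim: bs W0 => [|p bs IH] W0; first by rewrite /xform subst_cat.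
by rewrite !xform_cons -IH subst_cat [subst f (_ ++ _)]subst_cat subst_xpow.
Qed.

Lemma red_xform W0 bs :
  red (xform W0 bs) = red (xform (red W0) (map (fun p => (p.1, red p.2)) bs)).
Proof.
elim: bs W0 => [|p bs IH] W0; first by rewrite /xform !cats0 redK.
rewrite map_cons !xform_cons; apply: red_cat_congr; first by rewrite redK.
exact: red_cat_congr.
Qed.

Lemma reduced_cat d u v : reduced u -> reduced v ->
  (u != [::] -> v != [::] -> (last d u).1 != (head d v).1) ->
  reduced (u ++ v).
Proof.
elim: u => // a [|c u] IH ru rv Hb.
  case: v {IH} rv Hb => // b v rv /(_ isT isT) /= Hab.
  by apply/andP; split; first by apply: contraNneq Hab => ->.
case/andP: ru => ca ru; rewrite cat_cons; apply/andP; split => //.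
exact: IH.
Qed.

Lemma all_last (P : pred letter) d u : u != [::] -> all P u -> P (last d u).
Proof. by case: u => // a u _ /allP Pu; apply: Pu; rewrite last_cons mem_last. Qed.

Lemma reduced_xform W0 bs : reduced W0 -> xfree W0 ->
  all (fun p => [&& p.1 != 0%R, reduced p.2 & xfree p.2]) bs ->
  all (fun p => p.2 != [::]) (take (size bs).-1 bs) ->
  reduced (xform W0 bs).
Proof.
elim: bs W0 => [|[n w] bs IH] W0 rW0 xW0; first by rewrite /xform cats0.
case/andP=> /and3P[/= n0 rw xw] Hbs Hne.
have [{}Hne wne] : all (fun p => p.2 != [::]) (take (size bs).-1 bs) /\
                   (bs != [::] -> w != [::]).
  by case: bs Hne {IH Hbs} => [|q bs] //= /andP[-> ->].
have xn0 : xpow n != [::] by rewrite xpowE -size_eq0 size_nseq absz_eq0.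
have xn : all (fun l : letter => l.1 == 0) (xpow n).
  by rewrite xpowE all_nseq orbT.
have head_xfree : xform w bs != [::] -> (head (0, true) (xform w bs)).1 != 0.
  case: w {rw IH} wne xw => [|a w] wne; last by case/andP.
  by case: bs wne {Hbs Hne} => // q bs /(_ isT).
rewrite xform_cons; apply: (reduced_cat (d := (0, true))) => // [|W0n _].
  apply: (reduced_cat (d := (0, true))); rewrite ?reduced_xpow ?IH // => _.
  by move/head_xfree; rewrite (eqP (all_last _ xn0 xn)) eq_sym.
case: (xpow n) xn0 xn => // a s _ /andP[/eqP /= -> _].
exact: all_last xW0.
Qed.

Theorem lemma3p1 (A B C D : word) (W0 : word) (blocks : seq (int * word)) :
  local_braid_rep A B C D ->
  CDword W0 ->
  all (fun p => (p.1 != 0%R) && CDword p.2) blocks ->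
  all (fun p => p.2 != [::]) (take (size blocks).-1 blocks) ->
  red (app2 C (app2 B (gen 0) (gen 1)) (gen 2)) = xform W0 blocks ->
  red (app2 C (app2 B (gen 0) (app2 C (gen 1) (gen 2))) (app2 D (gen 1) (gen 2)))
  = xform (red (subst (s2 C D) W0))
          (map (fun p => (p.1, red (subst (s2 C D) p.2))) blocks).
Proof.
move=> [/and4P[/andP[_ _] /andP[vB _] /andP[vC _] /andP[vD _]] [_ [autCD _]]].
move=> cW0 Hblocks Hne Hred.
have xfree_red_s2 W : CDword W -> xfree (red (subst (s2 C D) W)).
  by move=> cW; apply/all_red/xfree_subst_s2.
have -> : app2 C (app2 B (gen 0) (app2 C (gen 1) (gen 2))) (app2 D (gen 1) (gen 2))
          = subst (s2 C D) (app2 C (app2 B (gen 0) (gen 1)) (gen 2)).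
  by rewrite !subst_app2 // !subst_gen.
rewrite red_subst Hred subst_xform // red_xform -map_comp red_reduced //.
apply: reduced_xform; rewrite ?reduced_red ?xfree_red_s2 //.
  rewrite all_map; apply: sub_all Hblocks => -[n w] /andP[/= -> cw].
  by rewrite reduced_red xfree_red_s2.
rewrite size_map -map_take all_map; apply/allP => -[n w] inT /=.
have /andP[_ cw] := allP Hblocks _ (mem_take inT).
exact: red_subst_s2_neq0 (allP Hne _ inT).
Qed.
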